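(* Let $(S,T,F,M_0,\ell)$ be a Petri net, $T_+\subseteq T$ a set of transitions such that $F\restriction(S\cup T_+)$ is acyclic, and $S_+\subseteq S$ a set of places. Let $\bar M\in\mathbb N^{S_+}$ and let $H$ be a finite multiset in $\mathbb N^{T_+}$ such that $\bar M+[\![H]\!]\in\mathbb N^S$. Then (a) for any faithful place $s$ w.r.t. $T_+$ and $S_+$, $(\bar M+[\![H]\!])(s)\cdot{}^*s\le\bar M$; (b) for any $k\in\mathbb N$ and any transition $t$ with $(\bar M+[\![H]\!])[k\cdot\{t\}\rangle$, we have $k\cdot{}^*t\le\bar M$.
   Context: A Petri net $(S,T,F,M_0,\ell)$ has disjoint $S,T$ and $F:(S\times T)\cup(T\times S)\to\mathbb N$. ${}^\bullet x(y)=F(y,x)$, $x^\bullet(y)=F(x,y)$, extended additively to finite multisets $H$ of transitions; $[\![H]\!]=H^\bullet-{}^\bullet H$ (a signed multiset of places; multisets over $S_+$ are identified with multisets over $S$ that vanish outside $S_+$). $M[G\rangle$ iff ${}^\bullet G\le M$. $F\restriction(S\cup T_+)$ is acyclic iff there is no nonempty path $x_0x_1\cdots x_n$ with $x_0=x_n$, all $x_i\in S\cup T_+$ and $F(x_i,x_{i+1})>0$. A path is a sequence $\pi=x_0x_1\cdots x_n$ of places and transitions with $F(x_i,x_{i+1})>0$ for $0\le i<n$; its arc weight is $F(\pi)=\prod_{i=0}^{n-1}F(x_i,x_{i+1})$. A place $s$ is faithful w.r.t. $T_+$ and $S_+$ iff $|\{s\}\cap S_+|+\sum_{t\in T_+}F(t,s)=1$.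 A path from $x_0$ to $x_n$ is faithful iff every $x_i$ with $0\le i<n$ is either a transition in $T_+$ or a faithful place. For $x\in S\cup T$, ${}^*x\in(\mathbb N\cup\{\infty\})^{S_+}$ is given by ${}^*x(s)=\sup\{F(\pi)\mid\pi$ a faithful path from $s\in S_+$ to $x\}$ (0 if no such path); scalar multiplication uses the convention $0\cdot\infty=0$. *)

From mathcomp Require Import all_boot.
From Stdlib Require Import ClassicalEpsilon.
Set Implicit Arguments. Unset Strict Implicit. Unset Printing Implicit Defensive.

Inductive enat := Fin of nat | Inf.

(* supremum of a set of naturals in N ∪ {∞}; sup of the empty set is 0 *)
Definition sup_nat (P : nat -> Prop) : enat :=
  match excluded_middle_informative (exists b, forall n, P n -> n <= b) with
  | left _ => Fin (epsilon (inhabits 0%N)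
                 (fun m => (forall n, P n -> n <= m) /\
                           (forall b, (forall n, P n -> n <= b) -> m <= b)))
  | right _ => Inf
  end.

Definition emul (k : nat) (e : enat) : enat :=
  match e with Fin n => Fin (k * n) | Inf => if k == 0 then Fin 0 else Inf end.

Definition ele (e : enat) (m : nat) : Prop :=
  match e with Fin n => n <= m | Inf => False end.

Section Net.
(* A Petri net with places S and transitions T (disjoint: nodes are S + T).
   F is split into Fst : S×T -> N and Fts : T×S -> N. *)
Variables (S T : Type) (Fst : S -> T -> nat) (Fts : T -> S -> nat).

Definition node := (S + T)%type.

Definition Fn (x y : node) : nat :=
  match x, y with
  | inl s, inr t => Fst s t
  | inr t, inl s => Fts t s
  | _, _ => 0
  end.

(* preset / postset of a finite multiset of transitions (a list) *)
Definition pre (G : seq T) (s : S) : nat := sumn [seq Fst s t | t <- G].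
Definition post (G : seq T) (s : S) : nat := sumn [seq Fts t s | t <- G].

(* (Mbar + [[H]])(s); meaningful (untruncated) when pre H s <= Mbar s + post H s *)
Definition after (M : S -> nat) (H : seq T) (s : S) : nat :=
  M s + post H s - pre H s.

(* the path x :: rest  (x_0 = x, x_n = last x rest) *)
Fixpoint is_path (x : node) (rest : seq node) : Prop :=
  match rest with [::] => True | y :: r => 0 < Fn x y /\ is_path y r end.

Fixpoint pweight (x : node) (rest : seq node) : nat :=
  match rest with [::] => 1 | y :: r => Fn x y * pweight y r end.

Variables (Tplus : T -> bool) (Splus : S -> bool).

Definition in_STp (x : node) : bool :=
  match x with inl _ => true | inr t => Tplus t end.

Definition acyclic : Prop :=
  forall (x : node) (rest : seq node),
    rest <> [::] -> is_path x rest -> last x rest = x ->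
    all in_STp (x :: rest) -> False.

(* |{s} ∩ S_+| + Σ_{t ∈ T_+} F(t,s) = 1, for possibly infinite T
   (a sum of naturals equals 1 iff exactly one term is 1 and all others 0) *)
Definition faithful (s : S) : Prop :=
  (Splus s /\ forall t, Tplus t -> Fts t s = 0) \/
  (~~ Splus s /\ exists t0, [/\ Tplus t0, Fts t0 s = 1 &
                              forall t, Tplus t -> t <> t0 -> Fts t s = 0]).

Definition faithful_node (x : node) : Prop :=
  match x with inl s => faithful s | inr t => Tplus t end.

(* every x_i with i < n is a T_+ transition or a faithful place *)
Fixpoint faithful_prefix (x : node) (rest : seq node) : Prop :=
  match rest with [::] => True | y :: r => faithful_node x /\ faithful_prefix y r end.

(* *x (s) = sup { F(pi) | pi faithful path from s ∈ S_+ to x } (0 if none) *)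
Definition star (x : node) (s : S) : enat :=
  sup_nat (fun w => exists rest : seq node,
     [/\ Splus s, is_path (inl s) rest, faithful_prefix (inl s) rest,
         last (inl s) rest = x & pweight (inl s) rest = w]).

End Net.

From mathcomp Require Import all_boot.
From Stdlib Require Import Classical ClassicalEpsilon.
Set Implicit Arguments. Unset Strict Implicit.

(* Along a faithful path pi from s' in S_+, every place p reached satisfies
   (Mbar + post H)(p) * F(pi) <= Mbar(s').  At s' itself this holds because a
   faithful place of S_+ has no producer in T_+.  A faithful place p outside
   S_+ has exactly one producer t in T_+, with arc weight 1, so post H p counts
   the occurrences of t in H; each of them consumes F(q,t) tokens from the
   preceding place q, so F(q,t) * post H p <= pre H q <= (Mbar + post H)(q),
   and the bound propagates from q to p.  Both claims then follow by bounding
   the weight of the last arc of the path. *)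

Lemma bounded_nat_has_lub (P : nat -> Prop) b : (forall n, P n -> n <= b) ->
  exists m, (forall n, P n -> n <= m) /\ (forall b', (forall n, P n -> n <= b') -> m <= b').
Proof.
elim: b => [|b IHb] le_b; first by exists 0.
have [le_b'|not_le_b'] := classic (forall n, P n -> n <= b); first exact: IHb.
exists b.+1; split=> // c le_c; rewrite leqNgt; apply/negP => c_le_b.
by apply: not_le_b' => n Pn; apply: leq_trans (le_c n Pn) _.
Qed.

Lemma emul_sup_nat_le (P : nat -> Prop) c m : (forall w, P w -> c * w <= m) ->
  ele (emul c (sup_nat P)) m.
Proof.
move=> cP_le_m; rewrite /sup_nat; case: excluded_middle_informative => [[b Pb]|unbounded].
  have lub_spec := epsilon_spec (inhabits 0) _ (bounded_nat_has_lub Pb).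
  case: lub_spec; set e := epsilon _ _ => _ e_least.
  case: c cP_le_m => [|c] cP_le_m //=; rewrite mulnC -leq_divRL //.
  by apply: e_least => w Pw; rewrite leq_divRL // mulnC cP_le_m.
case: c cP_le_m => [|c] cP_le_m //=; apply: unbounded; exists m => w Pw.
by apply: leq_trans (cP_le_m w Pw); rewrite leq_pmull.
Qed.

Section Paths.
Variables (S T : Type) (Fst : S -> T -> nat) (Fts : T -> S -> nat).
Variables (Tplus : T -> bool) (Splus : S -> bool).

Lemma is_path_rcons x r y : is_path Fst Fts x (rcons r y) <->
  is_path Fst Fts x r /\ 0 < Fn Fst Fts (last x r) y.
Proof. by elim: r x => [|z r IHr] x /=; rewrite ?IHr; tauto. Qed.

Lemma pweight_rcons x r y :
  pweight Fst Fts x (rcons r y) = pweight Fst Fts x r * Fn Fst Fts (last x r) y.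
Proof. by elim: r x => [|z r IHr] x /=; rewrite ?mul1n ?muln1 ?IHr ?mulnA. Qed.

Lemma faithful_prefix_rcons x r y :
  faithful_prefix Fts Tplus Splus x (rcons r y) <->
  faithful_prefix Fts Tplus Splus x r /\ faithful_node Fts Tplus Splus (last x r).
Proof. by elim: r x => [|z r IHr] x /=; rewrite ?IHr; tauto. Qed.

End Paths.

Section Faithful.
Variables (S T : Type) (Fst : S -> T -> nat) (Fts : T -> S -> nat).
Variables (Tplus : T -> bool) (Splus : S -> bool).
Variable H : seq T.
Hypothesis HTplus : all Tplus H.

Lemma faithful_Splus_post0 s :
  faithful Fts Tplus Splus s -> Splus s -> post Fts H s = 0.
Proof.
case=> [[_ no_producer] _|[/negP notSs _] /notSs //].
by rewrite /post; elim: H HTplus => [|t H' IH] //= /andP[/no_producer -> /IH ->].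
Qed.

Lemma faithful_producer s t : faithful Fts Tplus Splus s -> Tplus t -> 0 < Fts t s ->
  [/\ ~~ Splus s, Fts t s = 1 & forall t', Tplus t' -> t' <> t -> Fts t' s = 0].
Proof.
case=> [[_ no_producer] /no_producer -> //|[notSs [t0 [_ t0s1 others0]]]] Tt ts_gt0.
have -> : t = t0 by apply: NNPP => ne; rewrite others0 in ts_gt0.
by split.
Qed.

Lemma faithful_post_le_pre s t q : faithful Fts Tplus Splus s -> Tplus t ->
  0 < Fts t s -> Fst q t * post Fts H s <= pre Fst H q.
Proof.
move=> faith_s Tt /(faithful_producer faith_s Tt)[_ ts1 others0].
rewrite /post /pre; elim: H HTplus => [|t' H' IH] /=; first by rewrite muln0.
case/andP=> Tt' /IH le_H'; rewrite mulnDr leq_add //.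
by have [->|ne] := classic (t' = t); rewrite ?ts1 ?muln1 // others0 ?muln0.
Qed.

End Faithful.

Section TokenBound.
Variables (S T : Type) (Fst : S -> T -> nat) (Fts : T -> S -> nat).
Variables (Tplus : T -> bool) (Splus : S -> bool) (Mbar : S -> nat) (H : seq T) (s' : S).
Hypothesis HMbar : forall s, ~~ Splus s -> Mbar s = 0.
Hypothesis HTplus : all Tplus H.
Hypothesis Hnat : forall s, pre Fst H s <= Mbar s + post Fts H s.
Hypothesis Ss' : Splus s'.

Local Notation faithful_path r :=
  [/\ is_path Fst Fts (inl s') r, faithful_prefix Fts Tplus Splus (inl s') r
    & faithful_node Fts Tplus Splus (last (inl s') r)].

(* At a transition t the bound is stated for the places t produces into: they
   inherit the weight of the path unchanged, since a faithful place receives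
   exactly one token from t. *)
Definition path_bound (x : node S T) (w : nat) : Prop :=
  match x with
  | inl p => (Mbar p + post Fts H p) * w <= Mbar s'
  | inr t => forall p, faithful Fts Tplus Splus p -> 0 < Fts t p ->
               post Fts H p * w <= Mbar s'
  end.

Lemma faithful_path_bound r : faithful_path r ->
  path_bound (last (inl s') r) (pweight Fst Fts (inl s') r).
Proof.
elim/last_ind: r => [[_ _ faith_s']|r y IHr].
  by rewrite /= muln1 (faithful_Splus_post0 HTplus faith_s') ?addn0.
rewrite last_rcons pweight_rcons => -[/is_path_rcons[path_r arc]].
case/faithful_prefix_rcons=> prefix_r faith_last faith_y.
have := IHr (And3 path_r prefix_r faith_last).
case: (last _ r) arc faith_last => [q|t] /=; case: y faith_y => [p|t'] //=.
- move=> Tt' _ _ bound_q p faith_p t'p_gt0; apply: leq_trans bound_q.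
  rewrite mulnCA mulnC leq_mul2r (leq_trans _ (Hnat q)) ?orbT //.
  by rewrite mulnC (faithful_post_le_pre Fst HTplus q faith_p Tt' t'p_gt0).
- move=> faith_p tp_gt0 Tt /(_ p faith_p tp_gt0).
  have [/HMbar -> tp1 _] := faithful_producer faith_p Tt tp_gt0.
  by rewrite tp1 muln1.
Qed.

Lemma faithful_place_bound r p : is_path Fst Fts (inl s') r ->
  faithful_prefix Fts Tplus Splus (inl s') r -> last (inl s') r = inl p ->
  faithful Fts Tplus Splus p -> after Fst Fts Mbar H p * pweight Fst Fts (inl s') r <= Mbar s'.
Proof.
move=> path_r prefix_r last_p faith_p.
have faith_last : faithful_node Fts Tplus Splus (last (inl s') r) by rewrite last_p.
have := faithful_path_bound (And3 path_r prefix_r faith_last); rewrite last_p.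
by apply: leq_trans; rewrite leq_mul2r leq_subr orbT.
Qed.

Lemma enabled_transition_bound k t r :
  (forall s, pre Fst (nseq k t) s <= after Fst Fts Mbar H s) ->
  is_path Fst Fts (inl s') r -> faithful_prefix Fts Tplus Splus (inl s') r ->
  last (inl s') r = inr t -> k * pweight Fst Fts (inl s') r <= Mbar s'.
Proof.
move=> enabled; case/lastP: r => [|r y] //; rewrite last_rcons pweight_rcons.
case/is_path_rcons=> path_r arc /faithful_prefix_rcons[prefix_r faith_last] y_t; subst y.
have := faithful_path_bound (And3 path_r prefix_r faith_last).
case: (last _ r) arc => [q|//] _ /= bound_q; apply: leq_trans bound_q.
have k_le : k * Fst q t <= after Fst Fts Mbar H q.
  by have := enabled q; rewrite /pre map_nseq sumn_nseq mulnC.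
by rewrite mulnCA mulnC leq_mul2r (leq_trans k_le) ?orbT ?leq_subr.
Qed.

End TokenBound.

Unset Implicit Arguments. Set Strict Implicit.
Theorem lemma6p7 (S T : Type) (Fst : S -> T -> nat) (Fts : T -> S -> nat)
  (Tplus : T -> bool) (Splus : S -> bool)
  (Hacyc : acyclic Fst Fts Tplus)
  (Mbar : S -> nat) (HMbar : forall s, ~~ Splus s -> Mbar s = 0)
  (H : seq T) (HH : all Tplus H)
  (Hnat : forall s, pre Fst H s <= Mbar s + post Fts H s) :
  (forall s : S, faithful Fts Tplus Splus s ->
     forall s' : S, Splus s' ->
       ele (emul (after Fst Fts Mbar H s) (star Fst Fts Tplus Splus (inl s) s'))
           (Mbar s'))
  /\
  (forall (k : nat) (t : T),
     (forall s : S, pre Fst (nseq k t) s <= after Fst Fts Mbar H s) ->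
     forall s' : S, Splus s' ->
       ele (emul k (star Fst Fts Tplus Splus (inr t) s')) (Mbar s')).
Proof.
split=> [s faith_s | k t enabled] s' Ss';
  apply: emul_sup_nat_le => w [r [_ path_r prefix_r last_r <-]].
- exact: (faithful_place_bound HMbar HH Hnat Ss' path_r prefix_r last_r faith_s).
- exact: (enabled_transition_bound HMbar HH Hnat Ss' enabled path_r prefix_r last_r).
Qed.
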